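(* Let $\Gamma=(V,E)$ be a simple graph of order $n$, size $m$ and maximum degree $\Delta$. Then the global offensive alliance number of $\Gamma$ satisfies $$\gamma_{a_o}(\Gamma)\ge \left\lceil\frac{(2n+\Delta+1)-\sqrt{(2n+\Delta+1)^{2}-8(2m+n)}}{4}\right\rceil$$ and the global strong offensive alliance number of $\Gamma$ satisfies $$\gamma_{\hat{a}_o}(\Gamma)\ge \left\lceil\frac{(2n+\Delta+2)-\sqrt{(2n+\Delta+2)^{2}-16(m+n)}}{4}\right\rceil.$$
   Context: For $S\subseteq V$ and $v\in V$, $N_S(v)=\{u\in S: u\sim v\}$ and $N_{V\setminus S}(v)=\{u\in V\setminus S: u\sim v\}$. A nonempty set $S\subseteq V$ is a global offensive alliance if $|N_S(v)|\ge |N_{V\setminus S}(v)|+1$ for every $v\in V\setminus S$, and a global strong offensive alliance if $|N_S(v)|\ge |N_{V\setminus S}(v)|+2$ for every $v\in V\setminus S$. $\gamma_{a_o}(\Gamma)$ (resp. $\gamma_{\hat a_o}(\Gamma)$) is the minimum cardinality of a global offensive (resp. global strong offensive) alliance. *)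

From HB Require Import structures.
From mathcomp Require Import all_boot all_order all_algebra.
From mathcomp Require Import reals.
Set Implicit Arguments. Unset Strict Implicit. Unset Printing Implicit Defensive.
Import Order.TTheory GRing.Theory Num.Theory.

Section Graph.
Variable T : finType.
Variable e : rel T.

Definition simple_graph := symmetric e /\ irreflexive e.

Definition nbhd_in (S : {set T}) (v : T) : {set T} := [set u in S | e v u].

Definition degree (v : T) : nat := #|[set u | e v u]|.

Definition max_degree : nat := \max_(v : T) degree v.

Definition edge_set : {set {set T}} :=
  [set E : {set T} | [exists x, exists y, e x y && (E == [set x; y])]].

Definition size_graph : nat := #|edge_set|.

Definition order_graph : nat := #|T|.

Definition global_offensive_alliance (S : {set T}) : bool :=
  (S != set0) &&
  [forall v in ~: S, #|nbhd_in S v| >= #|nbhd_in (~: S) v| + 1].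

Definition global_strong_offensive_alliance (S : {set T}) : bool :=
  (S != set0) &&
  [forall v in ~: S, #|nbhd_in S v| >= #|nbhd_in (~: S) v| + 2].

(* minimum cardinality; the whole vertex set is an alliance when T is
   nonempty, so #|T| is a valid default for the min. *)
Definition goa_number : nat :=
  \big[minn/#|T|]_(S : {set T} | global_offensive_alliance S) #|S|.

Definition gsoa_number : nat :=
  \big[minn/#|T|]_(S : {set T} | global_strong_offensive_alliance S) #|S|.
End Graph.

From HB Require Import structures.
From mathcomp Require Import all_boot all_order all_algebra.
From mathcomp Require Import reals.
From mathcomp Require Import ring lra zify.
Import Order.TTheory GRing.Theory Num.Theory.

Set Implicit Arguments.
Unset Strict Implicit.

(* If every vertex outside S has at least t more neighbours in S than outside,
   then deg v <= 2|S| - t there, so counting degrees gives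
   2m <= |S| Delta + (n - |S|)(2|S| - t).  This is a quadratic inequality in
   |S| whose smaller root is the stated bound (t = 1 for offensive, t = 2 for
   strong offensive alliances). *)

Section OffensiveMargin.
Variables (T : finType) (e : rel T).
Hypothesis simple_e : simple_graph e.

Lemma double_size_le_sum_degree : 2 * size_graph e <= \sum_v degree e v.
Proof.
have [sym_e irr_e] := simple_e.
have -> : 2 * size_graph e = \sum_(E in edge_set e) \sum_(v in E) 1.
  rewrite /size_graph mulnC -sum_nat_const; apply: eq_bigr => E.
  rewrite inE sum1_card => /existsP [x /existsP [y /andP [exy /eqP ->]]].
  by rewrite cards2; case: eqP => // eq_xy; rewrite eq_xy irr_e in exy.
rewrite (exchange_big_dep predT) //=; apply: leq_sum => v _.
rewrite sum1dep_card.
apply: leq_trans (leq_imset_card (fun u => [set v; u]) [set u | e v u]).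
apply: subset_leq_card; apply/subsetP => E; rewrite !inE.
case/andP=> /existsP [x /existsP [y /andP [exy /eqP ->]]].
rewrite !inE => /orP [] /eqP ->; apply/imsetP.
  by exists y; rewrite ?inE.
by exists x; rewrite ?inE 1?sym_e // setUC.
Qed.

Lemma degree_nbhd_inC (S : {set T}) v :
  degree e v = #|nbhd_in e S v| + #|nbhd_in e (~: S) v|.
Proof.
rewrite /degree -(cardsID S); congr (_ + _); apply: eq_card => u;
  by rewrite !inE andbC.
Qed.

Definition offensive_margin (t : nat) (S : {set T}) :=
  forall v, v \in ~: S -> #|nbhd_in e (~: S) v| + t <= #|nbhd_in e S v|.

Lemma global_offensive_alliance_margin S :
  global_offensive_alliance e S -> offensive_margin 1 S.
Proof.
by case/andP=> _ /forallP alliance v vS; have := alliance v; rewrite vS.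
Qed.

Lemma global_strong_offensive_alliance_margin S :
  global_strong_offensive_alliance e S -> offensive_margin 2 S.
Proof.
by case/andP=> _ /forallP alliance v vS; have := alliance v; rewrite vS.
Qed.

Lemma offensive_margin_setT t : offensive_margin t setT.
Proof. by move=> v; rewrite !inE. Qed.

Lemma offensive_margin_degree t S v :
  offensive_margin t S -> v \in ~: S -> degree e v + t <= 2 * #|S|.
Proof.
move=> margin_S vS; have := margin_S v vS.
have : #|nbhd_in e S v| <= #|S| by apply/subset_leq_card/subsetP => u /setIdP[].
by rewrite (degree_nbhd_inC S); lia.
Qed.

Lemma offensive_margin_size t S :
  offensive_margin t S ->
  2 * size_graph e + t * #|~: S| <= #|S| * max_degree e + 2 * #|S| * #|~: S|.
Proof.
move=> margin_S; have := double_size_le_sum_degree.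
rewrite (bigID (mem S)) /=.
have inS : \sum_(v in S) degree e v <= #|S| * max_degree e.
  by rewrite -sum_nat_const; apply: leq_sum => v _; apply: leq_bigmax.
have notinS : \sum_(v in ~: S) (degree e v + t) <= #|~: S| * (2 * #|S|).
  rewrite -sum_nat_const; apply: leq_sum => v.
  by apply: offensive_margin_degree.
rewrite big_split sum_nat_const /= in notinS.
under [\sum_(v | v \notin S) _]eq_bigl do rewrite -in_setC.
lia.
Qed.

End OffensiveMargin.

Local Open Scope ring_scope.

Lemma sub_sqrt_div4_le (R : rcfType) (B X s : R) :
  (B - 4 * s) ^+ 2 <= X -> (B - Num.sqrt X) / 4 <= s.
Proof.
move=> le_sq_X; have : B - 4 * s <= Num.sqrt X.
  by rewrite (le_trans (ler_norm _)) // -sqrtr_sqr ler_wsqrtr.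
by rewrite ler_pdivrMr //; lra.
Qed.

Lemma offensive_margin_card_ge (R : realType) (T : finType) (e : rel T) t S
    (B : R) :
  simple_graph e -> offensive_margin e t S ->
  B = 2 * (order_graph T)%:R + (max_degree e)%:R + t%:R ->
  Num.ceil ((B - Num.sqrt (B ^+ 2 - 8 * (2 * (size_graph e)%:R
                                      + t%:R * (order_graph T)%:R))) / 4)
    <= #|S|%:Z.
Proof.
move=> simple_e margin_S ->.
have := offensive_margin_size simple_e margin_S.
rewrite -(ler_nat R) !natrD !natrM => size_ineq.
rewrite ceil_le_int; apply: sub_sqrt_div4_le.
rewrite /order_graph -(cardsC S) natrD.
lra.
Qed.

Lemma le_bigmin_card (T : finType) (P : pred {set T}) (c : int) :
  c <= #|T|%:Z -> (forall S, P S -> c <= #|S|%:Z) ->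
  c <= (\big[minn/#|T|]_(S | P S) #|S|)%:Z.
Proof.
move=> le_c_T le_c_P; elim/big_ind: _ => // x y le_c_x le_c_y.
by rewrite /minn; case: ifP.
Qed.

Lemma offensive_margin_number_ge (R : realType) (T : finType) (e : rel T) t
    (P : pred {set T}) (B : R) :
  simple_graph e -> (forall S, P S -> offensive_margin e t S) ->
  B = 2 * (order_graph T)%:R + (max_degree e)%:R + t%:R ->
  Num.ceil ((B - Num.sqrt (B ^+ 2 - 8 * (2 * (size_graph e)%:R
                                      + t%:R * (order_graph T)%:R))) / 4)
    <= (\big[minn/#|T|]_(S | P S) #|S|)%:Z.
Proof.
move=> simple_e margin_P def_B.
apply: le_bigmin_card => [|S /margin_P margin_S].
  rewrite -cardsT.
  exact: offensive_margin_card_ge simple_e (offensive_margin_setT _ _) def_B.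
exact: offensive_margin_card_ge simple_e margin_S def_B.
Qed.

Theorem theorem7 (R : realType) (T : finType) (e : rel T) :
  simple_graph e ->
  let n : R := (order_graph T)%:R in
  let m : R := (size_graph e)%:R in
  let D : R := (max_degree e)%:R in
  Num.ceil (((2 * n + D + 1) - Num.sqrt ((2 * n + D + 1) ^+ 2 - 8 * (2 * m + n))) / 4)
    <= (goa_number e)%:Z
  /\
  Num.ceil (((2 * n + D + 2) - Num.sqrt ((2 * n + D + 2) ^+ 2 - 16 * (m + n))) / 4)
    <= (gsoa_number e)%:Z.
Proof.
move=> simple_e n m D; split.
- have := offensive_margin_number_ge (R := R) simple_e
    (@global_offensive_alliance_margin _ e) (erefl _).
  by rewrite mul1r.
- have := offensive_margin_number_ge (R := R) simple_e
    (@global_strong_offensive_alliance_margin _ e) (erefl _).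
  by rewrite (_ : 8 * _ = 16 * (m + n)) //; ring.
Qed.
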